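(* Let $q$ be an odd prime power. If $\{x_k\}_{k\in[n]}$ in $\mathbb{F}_{q^2}^d$ is an $(a,c_1,c_2)$-projective $2$-design for some $a,c_1,c_2\in\mathbb{F}_q$, then $n\ge d^2$.
   Context: For $a\in\mathbb{F}_{q^2}$ write $\overline{a}=a^q$; $A^*$ is conjugate transpose; $\langle x,y\rangle=x^*y$ on $\mathbb{F}_{q^2}^d$ and analogously on $(\mathbb{F}_{q^2}^d)^{\otimes 2}$. For a nondegenerate subspace $V$ (i.e. $V\cap V^\perp=\{0\}$), a family $\{y_k\}_{k\in[n]}$ in $V$ is a $c$-tight frame for $V$ ($c\in\mathbb{F}_q$) if $\operatorname{span}\{y_k\}=V$ and $\sum_k\langle y_k,y\rangle y_k=cy$ for all $y\in V$. $(\mathbb{F}_{q^2}^d)^{\otimes2}_{\mathrm{sym}}=\{\sum_{i,j}c_{ij}e_i\otimes e_j:c_{ij}=c_{ji}\}$ is nondegenerate with orthogonal projection $\Pi_d^{(2)}=\frac12\sum_{i,j}(e_ie_i^*\otimes e_je_j^*+e_ie_j^*\otimes e_je_i^* )$. A family $\{x_k\}_{k\in[n]}$ in $\mathbb{F}_{q^2}^d$ is an $(a,c_1,c_2)$-projective $2$-design ($a,c_1,c_2\in\mathbb{F}_q$) if (i) $\langle x_k,x_k\rangle=a$ for all $k$, (ii) $\{x_k\}$ is a $c_1$-tight frame for $\mathbb{F}_{q^2}^d$, and (iii) $\{x_k\otimes x_k\}$ is a $c_2$-tight frame for $(\mathbb{F}_{q^2}^d)^{\otimes 2}_{\mathrm{sym}}$.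 *)

From HB Require Import structures.
From mathcomp Require Import all_boot all_order all_algebra all_field.
Set Implicit Arguments. Unset Strict Implicit. Unset Printing Implicit Defensive.
Import GRing.Theory.
Local Open Scope ring_scope.

(* F plays the role of F_{q^2}; conjugation a |-> a^q. *)
Definition hconj (F : finFieldType) (q : nat) (a : F) : F := a ^+ q.

(* Elements of F_q inside F_{q^2}: fixed points of conjugation. *)
Definition in_Fq (F : finFieldType) (q : nat) (a : F) : Prop := a ^+ q = a.

(* Hermitian inner product <u,v> = u^* v on F^(r x s); vectors of F^d are
   'rV_d = 'M_(1,d), and (F^d)^{⊗2} is identified with 'M_(d,d) via
   e_i ⊗ e_j <-> delta_mx i j. *)
Definition hip (F : finFieldType) (q : nat) (r s : nat) (u v : 'M[F]_(r, s)) : F :=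
  \sum_(i < r) \sum_(j < s) hconj q (u i j) * v i j.

Definition tight_frame (F : finFieldType) (q : nat) (r s n : nat)
  (V : 'M[F]_(r, s) -> Prop) (y : 'I_n -> 'M[F]_(r, s)) (c : F) : Prop :=
  (forall k, V (y k)) /\
  (forall v, V v <-> exists alpha : 'I_n -> F, v = \sum_(k < n) alpha k *: y k) /\
  (forall v, V v -> \sum_(k < n) hip q (y k) v *: y k = c *: v).

Definition full_space (F : finFieldType) (d : nat) (v : 'rV[F]_d) : Prop := True.

Definition sym_tensors (F : finFieldType) (d : nat) (A : 'M[F]_(d, d)) : Prop :=
  forall i j, A i j = A j i.

Definition tensor2 (F : finFieldType) (d : nat) (x : 'rV[F]_d) : 'M[F]_(d, d) :=
  \matrix_(i, j) (x 0 i * x 0 j).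

Definition projective_2design (F : finFieldType) (q d n : nat)
  (x : 'I_n -> 'rV[F]_d) (a c1 c2 : F) : Prop :=
  (forall k, hip q (x k) (x k) = a) /\
  tight_frame q (@full_space F d) x c1 /\
  tight_frame q (@sym_tensors F d) (fun k => tensor2 (x k)) c2.

From HB Require Import structures.
From mathcomp Require Import all_boot all_order all_algebra all_field.
From mathcomp Require Import ring zify.
Set Implicit Arguments. Unset Strict Implicit. Unset Printing Implicit Defensive.
Import GRing.Theory.
Local Open Scope ring_scope.

(* We identify (F^d)^{(x)2} with row vectors of length d*d via mxvec and
   stack the vectors vec(x_k (x) x_k) and vec(x_k x_k^* ) as the rows of two
   n x d^2 matrices T ("tensor_rows") and R ("outer_rows").  Evaluating the
   two tight-frame identities on basis vectors turns them into Gram-matrix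
   identities, with Swap the flip of the tensor factors, Sym = 1 + Swap and
   u = vec(1):
       2 (conj T)^T T = c2 Sym,   2 R^T R = c2 (Swap + u^T u),   1 R = c1 u.
   Since q is odd, 2 != 0 in F.
   - If c2 = 0, the rows of conj T are orthogonal to those of T, so
     rank T + rank (conj T) <= n; conjugation (Frobenius) preserves rank,
     the rows of Sym lie in the row space of T, and 2 rank Sym >= d^2
     because Sym + D Sym D = 2 for a diagonal sign matrix D.
   - If c2 != 0, the invertible Swap lies in the row space of R + u, so
     d^2 <= rank (R + u); either u is in the row space of R (c1 != 0) or the
     all-ones vector is in the left kernel of R (c1 = 0), and n >= d^2 follows. *)

Lemma two_neq0_pchar (F : fieldType) (p : nat) :
  p \in [pchar F] -> odd p -> (2 : F) != 0.
Proof.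
move=> pF odd_p; apply/negP => /eqP two0.
have : (p %| 2)%N by rewrite (dvdn_pcharf pF) two0.
by rewrite (dvdn_prime2 (pcharf_prime pF)) // => /eqP p2; rewrite p2 in odd_p.
Qed.

(* Powers of the characteristic are [pchar F]-numbers, so x |-> x ^+ p^e
   is additive. *)
Lemma pchar_nat_pow (F : fieldType) (p e : nat) :
  p \in [pchar F] -> [pchar F].-nat (p ^ e)%N.
Proof.
move=> pF; rewrite pnatX (eq_pnat _ (pcharf_eq pF)).
by rewrite pnat_id ?(pcharf_prime pF) ?orbT.
Qed.

Lemma hip_delta (F : finFieldType) (q r s : nat) (u : 'M[F]_(r, s)) i j :
  hip q u (delta_mx i j) = hconj q (u i j).
Proof.
rewrite /hip (bigD1 i) //= [X in _ + X]big1 => [|i' ne]; last first.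
  by apply: big1 => j' _; rewrite mxE (negbTE ne) mulr0.
rewrite addr0 (bigD1 j) //= [X in _ + X]big1 => [|j' ne].
  by rewrite mxE !eqxx mulr1 addr0.
by rewrite mxE eqxx (negbTE ne) mulr0.
Qed.

Lemma hipDr (F : finFieldType) (q r s : nat) (u v w : 'M[F]_(r, s)) :
  hip q u (v + w) = hip q u v + hip q u w.
Proof.
rewrite /hip -big_split; apply: eq_bigr => i _.
by rewrite -big_split; apply: eq_bigr => j _; rewrite mxE mulrDr.
Qed.

Section TensorIndices.
Variables (F : fieldType) (d : nat).

Lemma tensor_entry (M : 'M[F]_(d * d)) a b c e :
  M (mxvec_index a b) (mxvec_index c e) = vec_mx (row (mxvec_index a b) M) c e.
Proof. by rewrite -[RHS]mxvecE vec_mxK mxE. Qed.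

Lemma tensor_entry_scalar (s : F) a b c e :
  (s%:M : 'M_(d * d)) (mxvec_index a b) (mxvec_index c e)
  = s * ((c == a) && (e == b))%:R.
Proof.
rewrite tensor_entry rowE mul_mx_scalar -mxvec_delta linearZ /= mxvecK !mxE.
by rewrite eq_sym [e == b]eq_sym.
Qed.

(* The flip e_a (x) e_b |-> e_b (x) e_a, i.e. transposition on vec'd matrices. *)
Definition Swap : 'M[F]_(d * d) := lin_mx (@trmx F d d).

Lemma mul_Swap (A : 'M[F]_d) : mxvec A *m Swap = mxvec A^T.
Proof. exact: mul_vec_lin. Qed.

Lemma SwapE a b c e :
  Swap (mxvec_index a b) (mxvec_index c e) = ((c == b) && (e == a))%:R.
Proof.
rewrite tensor_entry rowE -mxvec_delta mul_Swap mxvecK trmx_delta mxE.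
by rewrite eq_sym [e == a]eq_sym.
Qed.

Lemma Swap_invol : Swap *m Swap = 1%:M.
Proof.
apply/row_matrixP => i; rewrite row_mul row1 rowE -[delta_mx 0 i]vec_mxK.
by rewrite !mul_Swap trmxK.
Qed.

Lemma rank_Swap : \rank Swap = (d * d)%N.
Proof. by apply: mxrank_unit; case: (mulmx1_unit Swap_invol). Qed.

(* Twice the orthogonal projection onto the symmetric tensors. *)
Definition Sym : 'M[F]_(d * d) := 1%:M + Swap.

Lemma SymE a b c e : Sym (mxvec_index a b) (mxvec_index c e)
  = ((c == a) && (e == b))%:R + ((c == b) && (e == a))%:R.
Proof. by rewrite mxE tensor_entry_scalar mul1r SwapE. Qed.

Lemma row_Sym a b :
  row (mxvec_index a b) Sym = mxvec (delta_mx a b + delta_mx b a).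
Proof. by rewrite rowE mulmxDr mulmx1 -mxvec_delta mul_Swap trmx_delta linearD. Qed.

Definition sign_diag : 'M[F]_(d * d) :=
  diag_mx (mxvec (\matrix_(a, b) (((a < b)%N)%:R - ((b < a)%N)%:R))).

(* Conjugating Sym by sign_diag gives 1 - Swap, the antisymmetric part. *)
Lemma Sym_sign_conj : Sym + sign_diag *m Sym *m sign_diag = 2%:M.
Proof.
rewrite mul_diag_mx mul_mx_diag; apply/matrixP => i j.
case/mxvec_indexP: i => a b; case/mxvec_indexP: j => c e.
rewrite [RHS]tensor_entry_scalar [LHS]mxE SymE mxE mxE SymE !mxvecE !mxE.
have [->|ne] := eqVneq a b.
  rewrite ltnn /=; case: (eqVneq c b) => [->|cb]; case: (eqVneq e b) => [->|eb] /=;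
    by rewrite ?ltnn /=; ring.
have [sq anti] : (((a < b)%N)%:R - ((b < a)%N)%:R) ^+ 2 = 1 :> F /\
    (((a < b)%N)%:R - ((b < a)%N)%:R) * (((b < a)%N)%:R - ((a < b)%N)%:R) = -1 :> F.
  have [h|h|h] := ltngtP a b; try by rewrite /=; split; ring.
  by rewrite (val_inj h) eqxx in ne.
case B1: ((c == a) && (e == b)).
  move/andP: B1 => [/eqP -> /eqP ->]; rewrite (negbTE ne) /=.
  by rewrite addr0 mulr1 -expr2 sq; ring.
case B2: ((c == b) && (e == a)); last by rewrite /=; ring.
move/andP: B2 => [/eqP -> /eqP ->] /=.
by rewrite add0r mulr1 anti; ring.
Qed.

Lemma rank_Sym : (2 : F) != 0 -> (d * d <= 2 * \rank Sym)%N.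
Proof.
move=> two_nz.
have rank2 : \rank (2%:M : 'M[F]_(d * d)) = (d * d)%N.
  by rewrite -scalemx1 mxrank_scale_nz // mxrank1.
rewrite -[X in (X <= _)%N]rank2 -Sym_sign_conj mul2n -addnn.
apply: leq_trans (mxrank_add _ _) _; rewrite leq_add2l.
exact: leq_trans (mxrankM_maxl _ _) (mxrankM_maxr _ _).
Qed.

End TensorIndices.

Section RowsOf.
Variables (F : fieldType) (d m : nat).

Definition rows_of (y : 'I_m -> 'M[F]_d) : 'M[F]_(m, d * d) := \matrix_k mxvec (y k).

Lemma rows_ofE (y : 'I_m -> 'M[F]_d) k a b : rows_of y k (mxvec_index a b) = y k a b.
Proof. by rewrite mxE mxvecE. Qed.

Lemma mxvec_sum_sub_rows_of (y : 'I_m -> 'M[F]_d) (alpha : 'I_m -> F) :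
  (mxvec (\sum_k alpha k *: y k) <= rows_of y)%MS.
Proof.
suff -> : mxvec (\sum_k alpha k *: y k) = (\row_k alpha k) *m rows_of y by exact: submxMl.
rewrite mulmx_sum_row linear_sum; apply: eq_bigr => k _.
by rewrite linearZ /= rowK mxE.
Qed.

End RowsOf.

Section Design.
Variables (F : finFieldType) (q : nat).
Hypothesis q_nat : [pchar F].-nat q.

(* When q is a power of the characteristic, conjugation a |-> a^q is a ring
   morphism; this gives rank invariance and the algebra of conjugates. *)
Lemma hconj_is_nmod_morphism : GRing.nmod_morphism (@hconj F q).
Proof.
split=> [|u v]; rewrite /hconj; last exact: exprDn_pchar.
by rewrite expr0n; case: q q_nat.
Qed.

Lemma hconj_is_monoid_morphism : GRing.monoid_morphism (@hconj F q).
Proof. by split=> [|u v]; rewrite /hconj ?expr1n ?exprMn. Qed.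

HB.instance Definition _ :=
  GRing.isNmodMorphism.Build F F (@hconj F q) hconj_is_nmod_morphism.
HB.instance Definition _ :=
  GRing.isMonoidMorphism.Build F F (@hconj F q) hconj_is_monoid_morphism.

Variables (d n : nat) (x : 'I_n -> 'rV[F]_d) (c1 c2 : F).
Hypothesis full_frame : tight_frame q (@full_space F d) x c1.
Hypothesis sym_frame : tight_frame q (@sym_tensors F d) (fun k => tensor2 (x k)) c2.

Local Notation conj := (hconj q).

Lemma full_frame_moment a i : \sum_k x k 0 a * conj (x k 0 i) = c1 * (a == i)%:R.
Proof.
case: full_frame => _ [_ reconstruct].
have := congr1 (fun v : 'rV_d => v 0 a) (reconstruct (delta_mx 0 i) I).
rewrite summxE !mxE eqxx /= => <-.
by apply: eq_bigr => k _; rewrite mxE hip_delta mulrC.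
Qed.

Lemma sym_delta_pair a b : sym_tensors (delta_mx a b + delta_mx b a : 'M[F]_d).
Proof. by move=> i j; rewrite !mxE addrC; congr (_ + _); rewrite andbC. Qed.

(* The tight-frame identity on symmetric tensors, evaluated at the spanning
   tensors e_a (x) e_b + e_b (x) e_a. *)
Lemma sym_frame_moment a b i j :
  2 * \sum_k conj (x k 0 a * x k 0 b) * (x k 0 i * x k 0 j)
  = c2 * Sym F d (mxvec_index a b) (mxvec_index i j).
Proof.
case: sym_frame => _ [_ reconstruct].
have := congr1 (fun v : 'M_d => v i j) (reconstruct _ (sym_delta_pair a b)).
rewrite summxE SymE !mxE => <-.
rewrite mulr_sumr; apply: eq_bigr => k _.
by rewrite hipDr !hip_delta !mxE [x k 0 b * x k 0 a]mulrC; ring.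
Qed.

Definition tensor_rows : 'M[F]_(n, d * d) := rows_of (fun k => tensor2 (x k)).

Definition outer_rows : 'M[F]_(n, d * d) :=
  rows_of (fun k => (x k)^T *m map_mx conj (x k)).

Definition vec_id : 'rV[F]_(d * d) := mxvec 1%:M.

Lemma tensor_rowsE k a b : tensor_rows k (mxvec_index a b) = x k 0 a * x k 0 b.
Proof. by rewrite rows_ofE mxE. Qed.

Lemma outer_rowsE k a i : outer_rows k (mxvec_index a i) = x k 0 a * conj (x k 0 i).
Proof. by rewrite rows_ofE mxE big_ord1 !mxE. Qed.

Lemma gram_tensor_rows :
  2 *: ((map_mx conj tensor_rows)^T *m tensor_rows) = c2 *: Sym F d.
Proof.
apply/matrixP => i j; case/mxvec_indexP: i => a b; case/mxvec_indexP: j => i j.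
rewrite [LHS]mxE [RHS]mxE -sym_frame_moment mxE; congr (_ * _).
apply: eq_bigr => k _.
by rewrite mxE [map_mx _ _ _ _]mxE !tensor_rowsE.
Qed.

Lemma vec_idE a i : vec_id 0 (mxvec_index a i) = (a == i)%:R.
Proof. by rewrite mxvecE mxE. Qed.

Lemma gram_outer_rows :
  2 *: (outer_rows^T *m outer_rows) = c2 *: (Swap F d + vec_id^T *m vec_id).
Proof.
apply/matrixP => p p'; case/mxvec_indexP: p => a i; case/mxvec_indexP: p' => b j.
rewrite [LHS]mxE [RHS]mxE [X in c2 * X]mxE SwapE [X in _ + X]mxE big_ord1.
transitivity (2 * \sum_k conj (x k 0 i * x k 0 j) * (x k 0 a * x k 0 b)).
  congr (_ * _); rewrite mxE; apply: eq_bigr => k _.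
  by rewrite mxE !outer_rowsE rmorphM; ring.
rewrite sym_frame_moment SymE mxE !vec_idE -natrM mulnb addrC.
by rewrite [(b == i) && _]andbC [j == a]eq_sym [b == i]eq_sym.
Qed.

Lemma ones_outer_rows : const_mx 1 *m outer_rows = c1 *: vec_id.
Proof.
apply/rowP => p; case/mxvec_indexP: p => a i.
rewrite !mxE vec_idE -full_frame_moment; apply: eq_bigr => k _.
by rewrite outer_rowsE mxE mul1r.
Qed.

(* The x_k (x) x_k span the symmetric tensors, which contain the rows of Sym. *)
Lemma Sym_sub_tensor_rows : (Sym F d <= tensor_rows)%MS.
Proof.
apply/row_subP => p; case/mxvec_indexP: p => a b.
case: sym_frame => _ [span _]; have [alpha span_ab] := (span _).1 (sym_delta_pair a b).
by rewrite row_Sym span_ab mxvec_sum_sub_rows_of.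
Qed.

Hypothesis two_nz : (2 : F) != 0.

(* Case c2 = 0: T and its conjugate have orthogonal row spaces. *)
Lemma bound_c2_eq0 : c2 = 0 -> (d * d <= n)%N.
Proof.
move=> c2_0.
have orth : (map_mx conj tensor_rows)^T *m tensor_rows = 0.
  apply/eqP; move/eqP: gram_tensor_rows; rewrite c2_0 scale0r scaler_eq0.
  by rewrite (negbTE two_nz).
have conj_ker : ((map_mx conj tensor_rows)^T <= kermx tensor_rows)%MS.
  by rewrite sub_kermx orth.
have := mxrankS conj_ker; rewrite mxrank_ker mxrank_tr mxrank_map.
have := mxrankS Sym_sub_tensor_rows; have := rank_Sym d two_nz.
have := rank_leq_row tensor_rows.
lia.
Qed.

Lemma design_nonempty : (0 < d)%N -> c2 != 0 -> (0 < n)%N.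
Proof.
move=> d_gt0 c2_nz; rewrite lt0n; apply/negP => /eqP n0.
pose i0 := Ordinal d_gt0.
have := sym_frame_moment i0 i0 i0 i0.
rewrite big1 => [|k _]; last by have := ltn_ord k; rewrite {2}n0.
rewrite SymE eqxx mulr0 => /esym/eqP; rewrite mulf_eq0 (negbTE c2_nz) /=.
by rewrite -mulr2n (negbTE two_nz).
Qed.

(* Case c2 != 0: Swap = (2/c2) R^T R - u^T u lies in the row space of R + u. *)
Lemma Swap_sub_outer_rows : c2 != 0 -> (Swap F d <= outer_rows + vec_id)%MS.
Proof.
move=> c2_nz.
have -> : Swap F d = c2^-1 *: (2 *: (outer_rows^T *m outer_rows)) - vec_id^T *m vec_id.
  by rewrite gram_outer_rows scalerA mulVf // scale1r addrK.
apply: addmx_sub_adds; first by rewrite !scalemx_sub // submxMl.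
by rewrite (eqmx_opp (vec_id^T *m vec_id)) submxMl.
Qed.

(* Either u lies in the row space of R (c1 != 0), or the all-ones vector is
   in the left kernel of R (c1 = 0) and costs one dimension. *)
Lemma bound_c2_neq0 : (0 < d)%N -> c2 != 0 -> (d * d <= n)%N.
Proof.
move=> d_gt0 c2_nz; have Swap_sub := Swap_sub_outer_rows c2_nz.
have [c1_0|c1_nz] := eqVneq c1 0; last first.
  have vec_id_sub : (vec_id <= outer_rows)%MS.
    rewrite -(scalerK c1_nz vec_id) -ones_outer_rows.
    by rewrite scalemx_sub // submxMl.
  rewrite (addsmx_idPl vec_id_sub) in Swap_sub.
  by rewrite -(rank_Swap F d) (leq_trans (mxrankS Swap_sub)) ?rank_leq_row.
have n_gt0 := design_nonempty d_gt0 c2_nz.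
have ones_ker : ((const_mx 1 : 'rV[F]_n) <= kermx outer_rows)%MS.
  by rewrite sub_kermx ones_outer_rows c1_0 scale0r.
have ones_nz : (const_mx 1 : 'rV[F]_n) != 0.
  apply/negP => /eqP/rowP/(_ (Ordinal n_gt0)); rewrite !mxE.
  by apply/eqP; exact: oner_neq0.
have := mxrankS ones_ker; rewrite mxrank_ker rank_rV ones_nz.
have := mxrankS Swap_sub; rewrite rank_Swap.
have := (mxrank_adds_leqif outer_rows vec_id).1; have := rank_leq_row vec_id.
lia.
Qed.
End Design.

Theorem mainTheorem7 (F : finFieldType) (p e q d n : nat)
  (x : 'I_n -> 'rV[F]_d) (a c1 c2 : F) :
  prime p -> (0 < e)%N -> q = (p ^ e)%N -> odd q ->
  #|F| = (q ^ 2)%N ->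
  in_Fq q a -> in_Fq q c1 -> in_Fq q c2 ->
  projective_2design q x a c1 c2 ->
  (d ^ 2 <= n)%N.
Proof.
move=> p_prime e_gt0 qE odd_q cardF _ _ _ [_ [full_frame sym_frame]].
have pF : p \in [pchar F].
  by apply: (card_finPcharP (n := e * 2)) => //; rewrite cardF qE expnM.
have q_nat : [pchar F].-nat q by rewrite qE pchar_nat_pow.
have two_nz : (2 : F) != 0.
  by apply: (two_neq0_pchar pF); move: odd_q; rewrite qE oddX eqn0Ngt e_gt0.
rewrite -mulnn; have [->|d_gt0] := posnP d; first by [].
have [c2_0|c2_nz] := eqVneq c2 0.
  exact: (bound_c2_eq0 q_nat sym_frame two_nz c2_0).
exact: (bound_c2_neq0 q_nat full_frame sym_frame two_nz d_gt0 c2_nz).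
Qed.
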